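(* Let $n\ge1$, $k=\lfloor\log_2 n\rfloor$ and $r=n-2^k$. Let $A\in\mathbb{R}^{n\times n}$ be the unit-row tree matrix of size $n$ (defined in the context). Then $$\beta(A)=\Big(2\sqrt{k+1}-\sqrt{k+2}\Big)+\frac{n}{2^{k}}\Big(\sqrt{k+2}-\sqrt{k+1}\Big).$$ In particular, when $n=2^k$, $\beta(A)=\sqrt{k+1}$.
   Context: For $A\in\mathbb{R}^{m\times n}$, $\beta(A)=\frac{1}{2^n}\sum_{x\in\{-1,1\}^n}\|Ax\|_\infty$. Tree matrix: with $k=\lfloor\log_2 n\rfloor$ and $r=n-2^k$, list the $2^k$ sign strings $s\in\{-1,1\}^k$ in lexicographic order (with $-1<+1$). Replace each of the first $r$ strings $s$ by its two extensions $(s,-1)$ and $(s,+1)$ (keeping the order), and keep the remaining $2^k-r$ strings unchanged; this gives $n$ strings, $2r$ of length $k+1$ and $2^k-r$ of length $k$ (they are the root-to-leaf paths of a binary tree with $n$ leaves filled from the left, with left edges labeled $-1$ and right edges $+1$). For each such string $t$, form the row vector in $\mathbb{R}^n$ given by $(1,t,0,\dots,0)$ (a leading $1$, then $t$, then zeros to length $n$), and divide it by its Euclidean norm (i.e. by $\sqrt{k+2}$ or $\sqrt{k+1}$). The $n\times n$ matrix with these rows is the unit-row tree matrix. *)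

(* the reals are an arbitrary real-closed field R (rcfType),
   which includes the real numbers. *)
From HB Require Import structures.
From mathcomp Require Import all_boot all_order all_algebra.
Set Implicit Arguments. Unset Strict Implicit. Unset Printing Implicit Defensive.
Import Order.TTheory GRing.Theory Num.Theory.
Local Open Scope ring_scope.

Definition sgnb {R : pzRingType} (b : bool) : R := if b then 1 else -1.

Definition infnorm {R : realDomainType} m (y : 'cV[R]_m) : R :=
  \big[Num.max/0]_(i < m) `|y i 0|.

Definition signvec {R : pzRingType} n (s : {ffun 'I_n -> bool}) : 'cV[R]_n :=
  \col_j sgnb (s j).

Definition beta {R : realFieldType} m n (A : 'M[R]_(m, n)) : R :=
  (2 ^+ n)^-1 * \sum_(s : {ffun 'I_n -> bool}) infnorm (A *m @signvec R n s).

Fixpoint lex_strings (k : nat) : seq (seq bool) :=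
  if k is k'.+1 then
    [seq false :: t | t <- lex_strings k'] ++ [seq true :: t | t <- lex_strings k']
  else [:: [::]].

Definition tree_strings (n : nat) : seq (seq bool) :=
  let k := trunc_log 2 n in
  let r := (n - 2 ^ k)%N in
  flatten [seq [:: rcons t false; rcons t true] | t <- take r (lex_strings k)]
  ++ drop r (lex_strings k).

(* row (1, t, 0, ..., 0) (as a sequence, implicitly zero-padded) divided by its
   Euclidean norm sqrt(|t| + 1) *)
Definition tree_row {R : rcfType} (t : seq bool) : seq R :=
  [seq x / Num.sqrt (size t).+1%:R | x <- (1 :: [seq sgnb b | b <- t])].

Definition tree_matrix (R : rcfType) (n : nat) : 'M[R]_n :=
  \matrix_(i < n, j < n) nth 0 (tree_row (nth [::] (tree_strings n) i)) j.

From HB Require Import structures.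
From mathcomp Require Import all_boot all_order all_algebra.
From mathcomp Require Import ring lra zify.
Import Order.TTheory GRing.Theory Num.Theory.
Set Implicit Arguments. Unset Strict Implicit. Unset Printing Implicit Defensive.

(* Normalise a sign vector x by its first entry and let y_l = x_0 x_(l+1).  For a tree
   string t, the row of the matrix indexed by t gives |(A x)_t| = |1 + a| / sqrt(|t| + 1),
   where a is a sum of |t| signs, +1 exactly where t_l = y_l.  The row whose string is the
   prefix of y of its own length therefore scores sqrt(|t| + 1), and every other row at most
   (|t| - 1) / sqrt(|t| + 1) <= sqrt(k + 1).  Hence ||A x||_oo is sqrt(k + 2) when
   (y_0, ..., y_(k-1)) is one of the r = n - 2^k split strings, and sqrt(k + 1) otherwise.
   Every string of length k is that prefix for exactly 2^(n-k) sign vectors, so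
   beta(A) = sqrt(k + 1) + r / 2^k * (sqrt(k + 2) - sqrt(k + 1)). *)

Lemma size_lex_strings k : size (lex_strings k) = 2 ^ k.
Proof. by elim: k => [|k IHk] //=; rewrite size_cat !size_map IHk expnS mul2n addnn. Qed.

Lemma mem_lex_strings k t : (t \in lex_strings k) = (size t == k).
Proof.
elim: k t => [|k IHk] [|b t] //=; rewrite mem_cat.
  by apply/negbTE/norP; split; apply/mapP => -[].
rewrite eqSS -IHk.
have cons_inj (c : bool) : injective (cons c) by move=> u v [].
set L := lex_strings k.
have cons_notin c : (c :: t \in [seq ~~ c :: u | u <- L]) = false.
  by apply/mapP => -[u _ []]; case: c.
by case: b; [have := cons_notin true | have := cons_notin false] => /= ->;
  rewrite (mem_map (cons_inj _)) ?orbF.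
Qed.

Lemma lex_strings_uniq k : uniq (lex_strings k).
Proof.
have cons_inj (c : bool) : injective (cons c) by move=> u v [].
elim: k => [|k IHk] //=; rewrite cat_uniq !(map_inj_uniq (cons_inj _)) IHk andbT /=.
by apply/hasPn => _ /mapP[u _ ->]; apply/mapP => -[].
Qed.

Section TreeStrings.

Variable n : nat.
Hypothesis n_gt0 : (0 < n)%N.

Let k := trunc_log 2 n.
Let r := (n - 2 ^ k)%N.

Lemma trunc_log2_bounds : (2 ^ k <= n < 2 ^ k.+1)%N.
Proof. by rewrite trunc_logP ?trunc_log_ltn. Qed.

Lemma split_count_leq : (r <= 2 ^ k)%N.
Proof. by have := trunc_log2_bounds; rewrite expnS; lia. Qed.

Lemma trunc_log2_ltn : (k < n)%N.
Proof. by apply: leq_trans (ltn_expl k (ltnSn 1)) _; case/andP: trunc_log2_bounds. Qed.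

Lemma tree_stringsE :
  tree_strings n =
  [seq rcons t b | t <- take r (lex_strings k), b <- [:: false; true]]
  ++ drop r (lex_strings k).
Proof. by []. Qed.

Lemma size_tree_strings : size (tree_strings n) = n.
Proof.
rewrite tree_stringsE size_cat size_allpairs size_drop size_takel size_lex_strings.
  by rewrite /r /=; have := trunc_log2_bounds; rewrite expnS; lia.
exact: split_count_leq.
Qed.

Lemma mem_tree_strings u :
  u \in tree_strings n <->
  u \in drop r (lex_strings k) \/
  exists2 t, t \in take r (lex_strings k) & exists b, u = rcons t b.
Proof.
rewrite tree_stringsE mem_cat; split.
- case/orP => [/allpairsP[[t b] /= [Ht _ ->]]|]; last by left.
  by right; exists t => //; exists b.
- case=> [->|[t Ht [b ->]]]; first by rewrite orbT.
  by apply/orP; left; apply/allpairsP; exists (t, b); case: b.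
Qed.

Lemma size_tree_string_leq u : u \in tree_strings n -> (size u <= k.+1)%N.
Proof.
case/mem_tree_strings => [/mem_drop|[t /mem_take Ht [b ->]]].
  by rewrite mem_lex_strings => /eqP ->.
by move: Ht; rewrite size_rcons mem_lex_strings => /eqP ->.
Qed.

Lemma size_tree_string_ltn u : u \in tree_strings n -> (size u < n)%N.
Proof.
case/mem_tree_strings => [/mem_drop|[t Ht [b ->]]].
  by rewrite mem_lex_strings => /eqP ->; apply: trunc_log2_ltn.
have r_gt0 : (0 < r)%N by move: Ht; case: (r) => //; rewrite take0.
move: Ht => /mem_take; rewrite size_rcons mem_lex_strings => /eqP ->.
by have := ltn_expl k (ltnSn 1); have := trunc_log2_bounds; rewrite -/r; lia.
Qed.

End TreeStrings.

(* [rel_sign s l] is the sign of x_0 x_(l+1), with true for +1. *)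
Definition rel_sign n (s : {ffun 'I_n -> bool}) (l : nat) : bool :=
  nth false (fgraph s) 0 == nth false (fgraph s) l.+1.

Definition sign_pattern n (s : {ffun 'I_n -> bool}) : seq bool :=
  mkseq (rel_sign s) (trunc_log 2 n).

Definition sign_prefix n (s : {ffun 'I_n -> bool}) (k : nat) : seq bool :=
  mkseq (fun l => nth false (fgraph s) l.+1) k.

(* The relative signs end in a split node, so the best row has depth k + 1. *)
Definition deep_pattern n (s : {ffun 'I_n -> bool}) : bool :=
  sign_pattern s \in take (n - 2 ^ trunc_log 2 n) (lex_strings (trunc_log 2 n)).

Section SignPatternCount.

Variable n : nat.
Implicit Types (s : {ffun 'I_n -> bool}) (t : seq bool).

Lemma prod_indicator_interval k :
  (k < n)%N -> \prod_(j < n) (if 0 < j <= k then 1 else 2) = 2 ^ (n - k).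
Proof.
move=> lt_kn; rewrite -(big_mkord xpredT (fun j => if 0 < j <= k then 1 else 2)).
rewrite big_ltn ?(leq_ltn_trans _ lt_kn) // (big_cat_nat _ (n := k.+1)) //=.
rewrite big1_seq => [|j /andP[_]]; last by rewrite mem_index_iota => ->.
rewrite (eq_big_nat _ _ (F2 := fun=> 2)) => [|j /andP[le_kj _]]; last first.
  by rewrite (leqNgt j k) le_kj andbF.
by rewrite prod_nat_const_nat mul1n -expnS subnSK.
Qed.

Lemma card_prefix_fiber k t :
  (k < n)%N -> size t = k ->
  #|[set s : {ffun 'I_n -> bool} | sign_prefix s k == t]| = 2 ^ (n - k).
Proof.
move=> lt_kn size_t.
pose F (j : 'I_n) : pred bool := if 0 < j <= k then pred1 (nth false t j.-1) else predT.
have -> : [set s : {ffun 'I_n -> bool} | sign_prefix s k == t] = [set s in family F].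
  apply/setP => s; rewrite !inE; apply/eqP/familyP => [s_t j | s_F].
    rewrite /F -s_t; case: ifP => // /andP[j_gt0 le_jk].
    by rewrite inE nth_mkseq ?prednK ?nth_fgraph_ord // -ltnS prednK.
  apply: (@eq_from_nth _ false); rewrite size_mkseq // => l lt_lk.
  have lt_ln : (l.+1 < n)%N by apply: leq_trans lt_kn.
  have in_range : 0 < Ordinal lt_ln <= k := lt_lk.
  have := s_F (Ordinal lt_ln); rewrite /F in_range inE nth_mkseq // => /eqP <-.
  exact: (nth_fgraph_ord false (Ordinal lt_ln)).
rewrite (cardsE (family F)) card_family foldrE big_map big_enum /=.
rewrite -(prod_indicator_interval lt_kn).
by apply: eq_bigr => j _; rewrite /F; case: (0 < j <= k); [apply: card1 | apply: card_bool].
Qed.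

Hypothesis n_gt0 : (0 < n)%N.

Let k := trunc_log 2 n.
Let r := (n - 2 ^ k)%N.

(* In the +-1 reading, x |-> (x_0, x_0 x_1, ..., x_0 x_(n-1)). *)
Definition flip_by_first s : {ffun 'I_n -> bool} :=
  [ffun j => if val j == 0%N then s j else nth false (fgraph s) 0 == s j].

Lemma nth_fgraph_flip_by_first s l :
  (l < n)%N ->
  nth false (fgraph (flip_by_first s)) l =
  if l == 0%N then nth false (fgraph s) 0 else nth false (fgraph s) 0 == nth false (fgraph s) l.
Proof.
move=> lt_ln; rewrite -[l]/(val (Ordinal lt_ln)) !nth_fgraph_ord ffunE /=.
by case: eqP => // l0; rewrite -(nth_fgraph_ord false) /= l0.
Qed.

Lemma flip_by_first_inv : involutive flip_by_first.
Proof.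
move=> s; apply/ffunP => j; rewrite ffunE nth_fgraph_flip_by_first // eqxx ffunE.
by case: eqP => // _; case: (nth _ _ _); case: (s j).
Qed.

Lemma sign_pattern_flip_by_first s :
  sign_pattern s = sign_prefix (flip_by_first s) k.
Proof.
apply/eq_in_map => l; rewrite mem_iota add0n => /andP[_ lt_lk].
rewrite /rel_sign nth_fgraph_flip_by_first //.
exact: leq_ltn_trans lt_lk (trunc_log2_ltn n_gt0).
Qed.

Lemma card_sign_pattern_fiber t :
  size t = k -> #|[set s : {ffun 'I_n -> bool} | sign_pattern s == t]| = 2 ^ (n - k).
Proof.
move=> size_t; rewrite -(card_prefix_fiber (trunc_log2_ltn n_gt0) size_t).
rewrite -(card_preimset _ (inv_inj flip_by_first_inv)).
by apply: eq_card => s; rewrite !inE sign_pattern_flip_by_first flip_by_first_inv.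
Qed.

Lemma sum_deep_pattern :
  \sum_(s : {ffun 'I_n -> bool}) (deep_pattern s : nat) = r * 2 ^ (n - k).
Proof.
set S := take r (lex_strings k).
have uniq_S : uniq S by rewrite take_uniq ?lex_strings_uniq.
have -> : \sum_(s : {ffun 'I_n -> bool}) (deep_pattern s : nat) =
          \sum_(s : {ffun 'I_n -> bool}) \sum_(t <- S) (sign_pattern s == t : nat).
  apply: eq_bigr => s _; rewrite /deep_pattern -/k -/r -/S -(count_uniq_mem _ uniq_S).
  by rewrite -sumn_count sumnE big_map; apply: eq_bigr => t _; rewrite /= eq_sym.
rewrite exchange_big /= (eq_big_seq (fun=> 2 ^ (n - k))) => [|t t_S]; last first.
  have size_t : size t = k by apply/eqP; rewrite -mem_lex_strings (mem_take t_S).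
  rewrite -(card_sign_pattern_fiber size_t) -sum1dep_card big_mkcond.
  by rewrite [RHS]big_mkcond; apply: eq_bigr => s _; case: (_ == _).
rewrite big_const_seq count_predT iter_addn_0 mulnC size_takel //.
by rewrite size_lex_strings split_count_leq.
Qed.

End SignPatternCount.

Local Open Scope ring_scope.

Lemma sgnb_eq (R : pzRingType) (a b : bool) : sgnb (a == b) = sgnb a * sgnb b :> R.
Proof. by case: a; case: b; rewrite /sgnb /= ?mulr1 ?mul1r ?mulrN1 ?opprK. Qed.

Lemma sgnb_sqr (R : pzRingType) (a : bool) : sgnb a * sgnb a = 1 :> R.
Proof. by rewrite -sgnb_eq eqxx. Qed.

Lemma normr_sgnb (R : numDomainType) (a : bool) : `|sgnb a : R| = 1.
Proof. by case: a; rewrite /sgnb ?normrN normr1. Qed.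

Section Agreement.

Variable R : numDomainType.
Implicit Types (t : seq bool) (f : nat -> bool).

Definition agreement t f : R := \sum_(l < size t) sgnb (nth false t l == f l).

Definition mismatches t f : nat := #|[pred l : 'I_(size t) | nth false t l != f l]|.

Lemma agreementE t f : agreement t f = (size t)%:R - 2 * (mismatches t f)%:R.
Proof.
have sgnbE b : sgnb b = 1 - 2 * (~~ b)%:R :> R by case: b; rewrite /sgnb /=; ring.
rewrite /agreement (eq_bigr _ (fun l _ => sgnbE _)) sumrB sumr_const card_ord -mulr_sumr.
congr (_ - 2 * _); rewrite /mismatches -sum1_card natr_sum [RHS]big_mkcond.
by apply: eq_bigr => l _; rewrite inE; case: (_ != _).
Qed.

Lemma mismatches_leq t f : (mismatches t f <= size t)%N.
Proof. by rewrite -[X in (_ <= X)%N]card_ord max_card. Qed.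

Lemma mismatches_mkseq f m : mismatches (mkseq f m) f = 0%N.
Proof.
apply: eq_card0 => l; rewrite !inE nth_mkseq ?eqxx //.
by rewrite -[X in (_ < X)%N](size_mkseq f m).
Qed.

Lemma mismatches_gt0 t f : t != mkseq f (size t) -> (0 < mismatches t f)%N.
Proof.
rewrite lt0n; apply: contra => /eqP/card0_eq nomis.
apply/eqP/(@eq_from_nth _ false); rewrite ?size_mkseq // => l lt_l.
by have := nomis (Ordinal lt_l); rewrite !inE nth_mkseq // => /negbFE/eqP.
Qed.

End Agreement.

Section RowScore.

Variable R : rcfType.
Implicit Types (t : seq bool) (f : nat -> bool).

Lemma divr_sqrt (x : R) : 0 < x -> x / Num.sqrt x = Num.sqrt x.
Proof.
move=> x_gt0; have sx_neq0 : Num.sqrt x != 0 by rewrite gt_eqF ?sqrtr_gt0.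
by rewrite -{1}(sqr_sqrtr (ltW x_gt0)) expr2 mulfK.
Qed.

Lemma ler_div_sqrt (a x y : R) :
  0 <= a -> 0 < x -> a ^+ 2 <= x * y -> a / Num.sqrt x <= Num.sqrt y.
Proof.
move=> a_ge0 x_gt0 le_a2; have xy_ge0 := le_trans (sqr_ge0 a) le_a2.
have y_ge0 : 0 <= y by rewrite -(pmulr_rge0 _ x_gt0).
rewrite ler_pdivrMr ?sqrtr_gt0 // -sqrtrM // mulrC.
by rewrite -(ger0_norm a_ge0) -sqrtr_sqr ler_sqrt.
Qed.

Definition row_score t f : R := `|1 + agreement R t f| / Num.sqrt (size t).+1%:R.

Lemma row_score_mkseq f m : row_score (mkseq f m) f = Num.sqrt m.+1%:R.
Proof.
rewrite /row_score agreementE mismatches_mkseq size_mkseq mulr0 subr0.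
by rewrite addrC natr1 normr_nat divr_sqrt ?ltr0n.
Qed.

Lemma row_score_le t f m :
  t != mkseq f (size t) -> (size t <= m.+1)%N -> row_score t f <= Num.sqrt m.+1%:R.
Proof.
move=> /mismatches_gt0 mis_gt0 le_t; have mis_le := mismatches_leq t f.
rewrite /row_score agreementE.
set a := `|_|; have a_ge0 : 0 <= a := normr_ge0 _.
have a_le : a <= (size t)%:R - 1.
  rewrite ler_norml; rewrite -(ler_nat R) in mis_le; rewrite -(ler_nat R) in mis_gt0.
  by apply/andP; split; lra.
apply: ler_div_sqrt; rewrite ?ltr0n //.
rewrite -[(size t).+1%:R]natr1 -[m.+1%:R]natr1; rewrite -(ler_nat R) -natr1 in le_t.
nra.
Qed.

End RowScore.

Lemma tree_row_mul_signs (R : rcfType) n (s : {ffun 'I_n -> bool}) t :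
  (size t < n)%N ->
  `|\sum_(j < n) nth 0 (tree_row t) j * sgnb (s j)| = row_score R t (rel_sign s).
Proof.
move=> lt_t; rewrite /row_score; set c := Num.sqrt _.
have c_gt0 : 0 < c by rewrite sqrtr_gt0 ltr0n.
pose x j : R := sgnb (nth false (fgraph s) j).
pose F j := nth 0 (tree_row t) j * x j.
rewrite (eq_bigr (fun j : 'I_n => F j)) => [|j _]; last by rewrite /F /x nth_fgraph_ord.
have F_tail : \sum_((size t).+1 <= j < n) F j = 0.
  rewrite big1_seq // => j /andP[_]; rewrite mem_index_iota => /andP[le_tj _].
  by rewrite /F nth_default ?mul0r // /tree_row size_map /= size_map.
rewrite -(big_mkord xpredT F) (big_cat_nat _ (n := (size t).+1)) // F_tail Monoid.mulm1.
rewrite big_mkord big_ord_recl /F /tree_row /=.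
under eq_bigr => l _ do rewrite add0n (nth_map 0) ?size_map // (nth_map false) //.
(* x_0^2 = 1 lets x_0 be factored out of every term. *)
have termE l : sgnb (nth false t l) / c * x l.+1 =
    x 0%N / c * sgnb (nth false t l == rel_sign s l).
  by rewrite sgnb_eq /x sgnb_eq -[LHS]mul1r -(sgnb_sqr R (nth false (fgraph s) 0)); ring.
under eq_bigr => l _ do rewrite termE.
rewrite -mulr_sumr mul1r -/c mulrC -[X in `|X + _|]mulr1 -mulrDr.
by rewrite normrM normf_div normr_sgnb (gtr0_norm c_gt0) mul1r mulrC.
Qed.

Section TreeMatrixRows.

Variables (R : rcfType) (n : nat) (s : {ffun 'I_n -> bool}).
Hypothesis n_gt0 : (0 < n)%N.

Let k := trunc_log 2 n.
Let r := (n - 2 ^ k)%N.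
Let top_score : R := if deep_pattern s then Num.sqrt k.+2%:R else Num.sqrt k.+1%:R.

Lemma top_score_ge : Num.sqrt k.+1%:R <= top_score.
Proof. by rewrite /top_score; case: ifP; rewrite ?ler_sqrt ?ler_nat. Qed.

Lemma row_score_tree_string_le u :
  u \in tree_strings n -> row_score R u (rel_sign s) <= top_score.
Proof.
move=> u_tree; have le_u := size_tree_string_leq u_tree.
case: (eqVneq u (mkseq (rel_sign s) (size u))) => [u_pat|]; last first.
  by move=> neq_u; apply: le_trans (row_score_le _ neq_u le_u) top_score_ge.
rewrite u_pat row_score_mkseq.
case/mem_tree_strings: u_tree => [/mem_drop|[t t_split [b u_tb]]].
  by rewrite mem_lex_strings => /eqP ->; apply: top_score_ge.
have size_t : size t = k by apply/eqP; rewrite -mem_lex_strings (mem_take t_split).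
move: u_pat; rewrite u_tb size_rcons size_t mkseqS => /rcons_inj [t_pat _].
by rewrite /top_score /deep_pattern -/k -/r /sign_pattern -t_pat t_split.
Qed.

Lemma row_score_tree_string_max :
  exists2 u, u \in tree_strings n & row_score R u (rel_sign s) = top_score.
Proof.
rewrite /top_score /deep_pattern -/k -/r; case: ifP => deep.
  exists (mkseq (rel_sign s) k.+1); last by rewrite row_score_mkseq.
  apply/mem_tree_strings; right; exists (sign_pattern s) => //.
  by exists (rel_sign s k); rewrite mkseqS.
exists (sign_pattern s); last by rewrite row_score_mkseq.
apply/mem_tree_strings; left.
have : sign_pattern s \in take r (lex_strings k) ++ drop r (lex_strings k).
  by rewrite cat_take_drop mem_lex_strings size_mkseq.
by rewrite mem_cat deep.
Qed.

Lemma norm_tree_matrix_mul_signvec (i : 'I_n) :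
  `|(tree_matrix R n *m signvec s) i 0| =
  row_score R (nth [::] (tree_strings n) i) (rel_sign s).
Proof.
rewrite !mxE -tree_row_mul_signs; last first.
  by apply: size_tree_string_ltn; rewrite // mem_nth ?size_tree_strings.
by congr `|_|; apply: eq_bigr => j _; rewrite !mxE.
Qed.

Lemma infnorm_tree_matrix_mul_signvec :
  infnorm (tree_matrix R n *m signvec s) = top_score.
Proof.
apply/le_anti/andP; split.
  apply: bigmax_le => [|i _]; first by apply: le_trans top_score_ge; apply: sqrtr_ge0.
  rewrite norm_tree_matrix_mul_signvec; apply: row_score_tree_string_le.
  by rewrite mem_nth ?size_tree_strings.
have [u u_tree <-] := row_score_tree_string_max.
have i_lt : (index u (tree_strings n) < n)%N.
  by rewrite -[X in (_ < X)%N]size_tree_strings ?index_mem.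
apply: (bigmax_sup (Ordinal i_lt)) => //.
by rewrite norm_tree_matrix_mul_signvec /= nth_index.
Qed.

End TreeMatrixRows.

Lemma beta_tree_matrix (R : rcfType) n :
  (0 < n)%N ->
  let k := trunc_log 2 n in
  beta (tree_matrix R n) =
  Num.sqrt k.+1%:R + (n - 2 ^ k)%:R / 2 ^+ k * (Num.sqrt k.+2%:R - Num.sqrt k.+1%:R).
Proof.
move=> n_gt0 k; set a : R := Num.sqrt k.+2%:R; set b : R := Num.sqrt k.+1%:R.
rewrite /beta (eq_bigr (fun s => b + (deep_pattern s)%:R * (a - b))) => [|s _]; last first.
  rewrite infnorm_tree_matrix_mul_signvec //.
  by case: (deep_pattern s); rewrite ?mul1r ?mul0r ?addr0 // addrC subrK.
rewrite big_split /= sumr_const card_ffun card_bool card_ord -mulr_suml -natr_sum.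
rewrite sum_deep_pattern // -/k -[b *+ _]mulr_natr !natrM !natrX.
have le_kn : (k <= n)%N := ltnW (trunc_log2_ltn n_gt0).
have -> : (2 : R) ^+ n = 2 ^+ k * 2 ^+ (n - k) by rewrite -exprD subnKC.
have two_k_neq0 : 2 ^+ k != 0 :> R by rewrite expf_neq0 ?pnatr_eq0.
have two_nk_neq0 : 2 ^+ (n - k) != 0 :> R by rewrite expf_neq0 ?pnatr_eq0.
by field; rewrite two_k_neq0 two_nk_neq0.
Qed.

Theorem theorem3 (R : rcfType) (n : nat) :
  (1 <= n)%N ->
  let k := trunc_log 2 n in
  beta (tree_matrix R n) =
    (2 * Num.sqrt (k.+1)%:R - Num.sqrt (k.+2)%:R)
    + n%:R / 2 ^+ k * (Num.sqrt (k.+2)%:R - Num.sqrt (k.+1)%:R)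
  /\ ((n = 2 ^ k)%N -> beta (tree_matrix R n) = Num.sqrt (k.+1)%:R).
Proof.
move=> n_gt0 k; rewrite (beta_tree_matrix R n_gt0) -/k.
split => [|n_eq]; last by rewrite -n_eq subnn mul0r mul0r addr0.
have two_k_neq0 : 2 ^+ k != 0 :> R by rewrite expf_neq0 ?pnatr_eq0.
have [le_2k_n _] := andP (trunc_log2_bounds n_gt0).
by rewrite natrB // natrX; field.
Qed.
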